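(* Consider $n$ agents with private types $t_i\in[0,\infty)$ whose valuations are $v_i(t_i,S)=t_i\cdot|S|$ for every winning set $S\subseteq[n]$ (including sets with $i\notin S$). Then for every fixed $k\ge1$ there is no universally truthful mechanism that is competitive with respect to $\mathcal{F}^{(k)}$: for every constant $L\ge1$ there exists $n\ge k$ such that no universally truthful mechanism on $n$ such agents has expected revenue at least $\mathcal{F}^{(k)}(t)/L$ for all $t\in[0,\infty)^n$, where $\mathcal{F}^{(k)}(t)=\max\{c|S| : c\ge0,\ S\subseteq[n],\ |S|\ge k,\ v_i(t_i,S)\ge c\ \forall i\in S\}$.
   Context: A deterministic mechanism maps reported types to a winning set $S$ and prices $p_i$ charged only to $i\in S$; agent $i$'s utility is $v_i(t_i,S)-p_i$ if $i\in S$ and $v_i(t_i,S)$ if $i\notin S$; revenue is $\sum_{i\in S}p_i$. It is truthful if reporting the true type maximizes every agent's utility for all fixed reports of the others, and individually rational if each winner's payment does not exceed its value $v_i(t_i,S)$ under truthful reporting. A universally truthful mechanism is a probability distribution over deterministic truthful, individually rational mechanisms. *)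

From HB Require Import structures.
From mathcomp Require Import all_boot all_order all_algebra.
From mathcomp Require Import all_classical all_reals all_analysis.
Set Implicit Arguments. Unset Strict Implicit. Unset Printing Implicit Defensive.
Import Order.TTheory GRing.Theory Num.Theory.
Local Open Scope ring_scope.
Local Open Scope classical_set_scope.

Section Auction.
Variable R : realType.
Variable n : nat.

Definition profile := 'I_n -> R.

Definition nonneg_profile (t : profile) := forall i, 0 <= t i.

Definition val (ti : R) (S : {set 'I_n}) : R := ti * #|S|%:R.

(* deterministic mechanism: winning set and prices (prices charged only to winners) *)
Record mech := Mech {
  win : profile -> {set 'I_n};
  price : profile -> 'I_n -> R }.

Definition util (M : mech) (i : 'I_n) (ti : R) (b : profile) : R :=
  if i \in win M b then val ti (win M b) - price M b i else val ti (win M b).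

Definition update (b : profile) (i : 'I_n) (x : R) : profile :=
  fun j => if j == i then x else b j.

(* truthful: for every agent i, true type ti = b i, reports of others b,
   and every misreport x, truth-telling is at least as good *)
Definition truthful (M : mech) : Prop :=
  forall (b : profile), nonneg_profile b -> forall (i : 'I_n) (x : R), 0 <= x ->
    util M i (b i) (update b i x) <= util M i (b i) b.

Definition indiv_rational (M : mech) : Prop :=
  forall (t : profile), nonneg_profile t ->
    forall i, i \in win M t -> price M t i <= val (t i) (win M t).

Definition revenue (M : mech) (t : profile) : R :=
  \sum_(i in win M t) price M t i.

(* universally truthful mechanism: a probability distribution (probability
   space Omega with law P) over deterministic truthful IR mechanisms, with
   measurable revenue so that expected revenue is defined *)
Definition universally_truthful {d : measure_display} {Omega : measurableType d}
  (P : probability Omega R) (M : Omega -> mech) : Prop :=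
  (forall w, truthful (M w) /\ indiv_rational (M w)) /\
  (forall t : profile, measurable_fun setT (fun w => revenue (M w) t)).

Definition expected_revenue {d : measure_display} {Omega : measurableType d}
  (P : probability Omega R) (M : Omega -> mech) (t : profile) : \bar R :=
  (\int[P]_w (revenue (M w) t)%:E)%E.

Definition Fk (k : nat) (t : profile) : R :=
  sup [set x : R | exists (c : R) (S : {set 'I_n}),
        [/\ 0 <= c, (k <= #|S|)%N, (forall i, i \in S -> c <= val (t i) S)
          & x = c * #|S|%:R]].

End Auction.

From Pilot Require Import Defs.
From HB Require Import structures.
From mathcomp Require Import all_boot all_order all_algebra.
From mathcomp Require Import all_classical all_reals all_analysis.
From mathcomp Require Import ring lra.
From mathcomp Require Import measurable_realfun.

(* Give all agents the common type [2 ^+ j].  With [n] agents, [Fk] is then at least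
   [n ^ 2 * 2 ^+ j], so a competitive mechanism must extract expected revenue of order
   [2 ^+ j] at every scale [j].  In a deterministic truthful IR mechanism the number of
   winners is monotone in the reports, and Myerson's payment identity bounds each payment
   at report [2 ^+ j] by [2 ^+ j] times the number of winners minus its dyadic average
   over the smaller scales.  Hence [revenue (2 ^+ j) / 2 ^+ j] is at most [2 n] times an
   increment of that average, and these increments telescope: the sum over all scales of
   the normalised revenue is at most [2 n ^ 2], pointwise in the mechanism's randomness.
   Taking [n = k] and more than [2 L] scales contradicts competitiveness. *)
Set Implicit Arguments. Unset Strict Implicit. Unset Printing Implicit Defensive.
Import Order.TTheory GRing.Theory Num.Theory.
Local Open Scope ring_scope.

Section Profiles.
Context {R : realType} {n : nat}.

Lemma update_nonneg (b : profile R n) i x :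
  nonneg_profile b -> 0 <= x -> nonneg_profile (update b i x).
Proof. by move=> b0 x0 j; rewrite /update; case: eqP. Qed.

Lemma update_update (b : profile R n) i x y :
  update (update b i y) i x = update b i x.
Proof. by apply: funext => j; rewrite /update; case: eqP. Qed.

Lemma update_same (b : profile R n) i y : update b i y i = y.
Proof. by rewrite /update eqxx. Qed.

Definition cst_profile (s : R) : profile R n := fun=> s.

Lemma cst_profile_nonneg s : 0 <= s -> nonneg_profile (cst_profile s).
Proof. by move=> s0 j. Qed.

Lemma update_cst_profile i s : update (cst_profile s) i s = cst_profile s.
Proof. by apply: funext => j; rewrite /update; case: eqP. Qed.

Section CoordinatewiseMonotone.
Variable f : profile R n -> R.
Hypothesis f_update_mono : forall (b : profile R n) i x y,
  nonneg_profile b -> 0 <= x -> x <= y -> f (update b i x) <= f (update b i y).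

Definition splice (b b' : profile R n) (l : nat) : profile R n :=
  fun i => if (i < l)%N then b' i else b i.

Lemma splice_nonneg b b' l :
  nonneg_profile b -> nonneg_profile b' -> nonneg_profile (splice b b' l).
Proof. by move=> b0 b'0 i; rewrite /splice; case: ifP. Qed.

Lemma splice_step b b' l (o : 'I_n) : nat_of_ord o = l ->
  splice b b' l = update (splice b b' l) o (b o) /\
  splice b b' l.+1 = update (splice b b' l) o (b' o).
Proof.
move=> ol; split; apply: funext => j; rewrite /update /splice.
  by case: eqP => [->|//]; rewrite ol ltnn.
rewrite ltnS leq_eqVlt -ol; case: (j =P o) => [->|/eqP jo]; first by rewrite eqxx.
by rewrite (inj_eq val_inj) (negbTE jo).
Qed.

Lemma coordinatewise_mono (b b' : profile R n) :
  nonneg_profile b -> nonneg_profile b' -> (forall i, b i <= b' i) -> f b <= f b'.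
Proof.
move=> b0 b'0 bb'.
suff splice_mono l : f b <= f (splice b b' l).
  have -> : b' = splice b b' n by apply: funext => j; rewrite /splice ltn_ord.
  exact: splice_mono.
elim: l => [|l IH].
  by have -> : splice b b' 0 = b by apply: funext.
apply: le_trans IH _; have [ln|nl] := ltnP l n.
  have [e e1] := @splice_step b b' _ (Ordinal ln) erefl; rewrite e1 {1}e.
  by apply: f_update_mono; [exact: splice_nonneg|exact: b0|exact: bb'].
have -> // : splice b b' l.+1 = splice b b' l.
apply: funext => j; rewrite /splice.
by rewrite (leq_trans (ltn_ord j) nl) (leq_trans (ltn_ord j) (leqW nl)).
Qed.

End CoordinatewiseMonotone.
End Profiles.

(* [2 ^+ l * dyadic_mean h l = \sum_(m < l) 2 ^+ m * h m], a lower Riemann sum of [h]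
   on the partition [1 < 2 < ... < 2 ^+ l]. *)
Fixpoint dyadic_mean {R : realFieldType} (h : nat -> R) (l : nat) : R :=
  if l is l'.+1 then (dyadic_mean h l' + h l') / 2 else 0.

Section DyadicMean.
Variable R : realFieldType.
Implicit Types g h : nat -> R.

Lemma dyadic_mean_le g h l : (forall m, (m < l)%N -> g m <= h m) ->
  dyadic_mean g l <= dyadic_mean h l.
Proof.
elim: l => [|l IH] gh //=.
have := IH (fun m ml => gh m (ltnW ml)); have := gh l (ltnSn l); lra.
Qed.

Lemma dyadic_mean_le_last g l : 0 <= g 0%N -> (forall m, g m <= g m.+1) ->
  dyadic_mean g l <= g l.
Proof. by move=> g0 gS; elim: l => [|l IH] //=; have := gS l; lra. Qed.

Lemma dyadic_mean_le_bound g B l : 0 <= B -> (forall m, g m <= B) ->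
  dyadic_mean g l <= B.
Proof. by move=> B0 gB; elim: l => [|l IH] //=; have := gB l; lra. Qed.

End DyadicMean.

Section DeterministicMechanism.
Variables (R : realType) (n : nat) (M : mech R n).

Definition nwin (b : profile R n) : R := #|win M b|%:R.

Definition charge (i : 'I_n) (b : profile R n) : R :=
  if i \in win M b then price M b i else 0.

Definition scaled_revenue (j : nat) : R :=
  Num.max (revenue M (cst_profile (2 ^+ j))) 0 / 2 ^+ j.

Lemma util_charge i ti b : util M i ti b = ti * nwin b - charge i b.
Proof. by rewrite /util /Defs.val /nwin /charge; case: ifP; rewrite ?subr0. Qed.

Lemma revenue_charge t : revenue M t = \sum_i charge i t.
Proof. by rewrite /revenue big_mkcond. Qed.

Lemma scaled_revenue_ge0 j : 0 <= scaled_revenue j.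
Proof. by rewrite divr_ge0 ?exprn_ge0 // le_max lexx orbT. Qed.

Lemma nwin_ge0 b : 0 <= nwin b.
Proof. by []. Qed.

Lemma nwin_le b : nwin b <= n%:R.
Proof. by rewrite /nwin ler_nat -[X in (_ <= X)%N]card_ord max_card. Qed.

Hypothesis M_truthful : truthful M.

Lemma charge_update_gap b i x y : nonneg_profile b -> 0 <= x -> 0 <= y ->
  charge i (update b i y) - charge i (update b i x) <=
  y * (nwin (update b i y) - nwin (update b i x)).
Proof.
move=> b0 x0 y0.
have := @M_truthful _ (update_nonneg i b0 y0) i x x0.
by rewrite update_update update_same !util_charge; lra.
Qed.

Lemma nwin_update_mono b i x y : nonneg_profile b -> 0 <= x -> x <= y ->
  nwin (update b i x) <= nwin (update b i y).
Proof.
move=> b0 x0 xy; have y0 := le_trans x0 xy.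
have := charge_update_gap i b0 x0 y0; have := charge_update_gap i b0 y0 x0.
move=> gap_xy gap_yx.
have : 0 <= (y - x) * (nwin (update b i y) - nwin (update b i x)) by nra.
have [-> //|xy'] := eqVneq x y.
by rewrite pmulr_rge0 ?subr_ge0 // subr_gt0 lt_neqAle xy' xy.
Qed.

Lemma nwin_mono b b' : nonneg_profile b -> nonneg_profile b' ->
  (forall i, b i <= b' i) -> nwin b <= nwin b'.
Proof. by apply: coordinatewise_mono => {}b i x y; exact: nwin_update_mono. Qed.

Definition nwin_at_scale (j : nat) : R := nwin (cst_profile (2 ^+ j)).

Lemma nwin_at_scaleS j : nwin_at_scale j <= nwin_at_scale j.+1.
Proof.
apply: nwin_mono => [||i]; try exact/cst_profile_nonneg/exprn_ge0.
by apply: ler_weXn2l; rewrite ?ler1n.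
Qed.

Hypothesis M_ir : indiv_rational M.

Lemma charge_update0 b i : nonneg_profile b -> charge i (update b i 0) <= 0.
Proof.
move=> b0; rewrite /charge; case: ifP => // i_win.
have := M_ir (update_nonneg i b0 (lexx 0)) i_win.
by rewrite update_same /Defs.val mul0r.
Qed.

(* Myerson's payment bound, along the reports [0, 1, 2, ..., 2 ^+ l]. *)
Lemma charge_update_pow2 b i l : nonneg_profile b ->
  charge i (update b i (2 ^+ l)) <= 2 ^+ l *
    (nwin (update b i (2 ^+ l)) - dyadic_mean (fun m => nwin (update b i (2 ^+ m))) l).
Proof.
move=> b0; elim: l => [|l IH] /=.
  have := charge_update_gap i b0 (lexx 0) ler01.
  have := charge_update0 i b0; have := nwin_ge0 (update b i 0).
  by rewrite expr0 mul1r subr0; lra.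
have := charge_update_gap i b0 (exprn_ge0 l (ler0n R 2)) (exprn_ge0 l.+1 (ler0n R 2)).
move: IH; rewrite exprS; set X := (2 : R) ^+ l; set e := dyadic_mean _ l.
by lra.
Qed.

Lemma charge_at_scale i j : charge i (cst_profile (2 ^+ j)) <=
  2 ^+ j * (nwin_at_scale j - dyadic_mean nwin_at_scale j).
Proof.
have b0 : nonneg_profile (cst_profile (2 ^+ j) : profile R n).
  exact/cst_profile_nonneg/exprn_ge0.
have := charge_update_pow2 i j b0; rewrite update_cst_profile => /le_trans; apply.
rewrite ler_wpM2l ?exprn_ge0 // lerD2l lerN2; apply: dyadic_mean_le => m mj.
apply: nwin_mono => [||k]; first exact/cst_profile_nonneg/exprn_ge0.
  exact/update_nonneg/exprn_ge0.
rewrite /update /cst_profile; case: eqP => // _.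
by apply: ler_weXn2l; rewrite ?ler1n // ltnW.
Qed.

(* The revenue at scale [2 ^+ j] telescopes against the increments of the dyadic mean. *)
Lemma scaled_revenue_le j : scaled_revenue j <=
  2 * n%:R * (dyadic_mean nwin_at_scale j.+1 - dyadic_mean nwin_at_scale j).
Proof.
have pow_gt0 : 0 < (2 : R) ^+ j by apply: exprn_gt0.
have mean_le : 0 <= nwin_at_scale j - dyadic_mean nwin_at_scale j.
  by rewrite subr_ge0 dyadic_mean_le_last // => m; exact: nwin_at_scaleS.
have rev_le : revenue M (cst_profile (2 ^+ j)) <=
    n%:R * (2 ^+ j * (nwin_at_scale j - dyadic_mean nwin_at_scale j)).
  rewrite revenue_charge; apply: le_trans (ler_sum _ (fun i _ => charge_at_scale i j)) _.
  by rewrite sumr_const card_ord mulr_natl.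
rewrite ler_pdivrMr //=.
have -> : 2 * n%:R * ((dyadic_mean nwin_at_scale j + nwin_at_scale j) / 2 -
    dyadic_mean nwin_at_scale j) * 2 ^+ j =
  n%:R * (2 ^+ j * (nwin_at_scale j - dyadic_mean nwin_at_scale j)) by field.
by rewrite ge_max rev_le !mulr_ge0 // ltW.
Qed.

Lemma sum_scaled_revenue_le N : \sum_(j < N) scaled_revenue j <= 2 * n%:R * n%:R.
Proof.
apply: (@le_trans _ _ (2 * n%:R * dyadic_mean nwin_at_scale N)); last first.
  by rewrite ler_wpM2l // dyadic_mean_le_bound // => m; exact: nwin_le.
elim: N => [|N IH]; first by rewrite big_ord0 /= mulr0.
by rewrite big_ord_recr /=; have /= := scaled_revenue_le N; lra.
Qed.

End DeterministicMechanism.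

Lemma Fk_cst_profile (R : realType) (n k : nat) (s : R) : (k <= n)%N -> 0 <= s ->
  n%:R ^+ 2 * s <= Fk k (cst_profile s : profile R n).
Proof.
move=> kn s0; have card_le : forall S : {set 'I_n}, #|S|%:R <= n%:R :> R.
  by move=> S; rewrite ler_nat -[X in (_ <= X)%N]card_ord max_card.
have setT_witness : [/\ 0 <= s * n%:R, (k <= #|[set: 'I_n]|)%N,
    forall i, i \in [set: 'I_n] -> s * n%:R <= Defs.val (cst_profile s i) [set: 'I_n]
  & n%:R ^+ 2 * s = s * n%:R * #|[set: 'I_n]|%:R].
  rewrite cardsT card_ord; split => //; first exact: mulr_ge0.
    by move=> i _; rewrite /Defs.val /cst_profile cardsT card_ord.
  by rewrite expr2; ring.
apply: sup_upper_bound; last by exists (s * n%:R), [set: 'I_n].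
split; first by exists (n%:R ^+ 2 * s), (s * n%:R), [set: 'I_n].
exists (n%:R ^+ 2 * s) => _ [c [S [c0 _ cS ->]]].
have [->|[i iS]] := set_0Vmem S; first by rewrite cards0 mulr0 mulr_ge0.
have := cS i iS; rewrite /Defs.val /cst_profile => c_le.
apply: le_trans (ler_wpM2r (ler0n _ _) c_le) _.
by rewrite -mulrA mulrC expr2 ler_wpM2r // ler_pM ?card_le.
Qed.

Lemma integral_le_integral_maxr0 d (T : measurableType d) (R : realType)
    (mu : measure T R) (f : T -> R) :
  (\int[mu]_x (f x)%:E <= \int[mu]_x (Num.max (f x) 0)%:E)%E.
Proof.
rewrite integralE.
have -> : (fun x => (fun y => (f y)%:E)^\+ x)%E = (fun x => (Num.max (f x) 0)%:E).
  by apply: funext => x; rewrite funeposE EFin_max.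
by apply: geeDl; rewrite oppe_le0 integral_ge0 // => x _; exact: funeneg_ge0.
Qed.

Section RandomizedMechanism.
Context {R : realType} {n : nat} {d : measure_display} {Omega : measurableType d}.
Variables (P : probability Omega R) (M : Omega -> mech R n).
Hypothesis M_ut : universally_truthful P M.

Lemma measurable_scaled_revenue j :
  measurable_fun setT (fun w => (scaled_revenue (M w) j)%:E).
Proof.
apply/measurable_EFinP/measurable_funM; last exact: measurable_cst.
by apply: measurable_maxr; [exact: M_ut.2|exact: measurable_cst].
Qed.

Lemma expected_revenue_le_scaled j :
  ((2 ^+ j)^-1%:E * expected_revenue P M (cst_profile (2 ^+ j)) <=
    \int[P]_w (scaled_revenue (M w) j)%:E)%E.
Proof.
have inv_ge0 : 0 <= ((2 : R) ^+ j)^-1 by rewrite invr_ge0 exprn_ge0.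
have -> : (fun w => (scaled_revenue (M w) j)%:E) = (fun w =>
    (2 ^+ j)^-1%:E * (Num.max (revenue (M w) (cst_profile (2 ^+ j))) 0)%:E)%E.
  by apply: funext => w; rewrite -EFinM mulrC.
rewrite ge0_integralZl_EFin //.
- exact/lee_wpmul2l/integral_le_integral_maxr0.
- by move=> w _; rewrite lee_fin le_max lexx orbT.
apply/measurable_EFinP/measurable_maxr; [exact: M_ut.2|exact: measurable_cst].
Qed.

Lemma sum_expected_scaled_revenue_le N :
  (\sum_(j < N) \int[P]_w (scaled_revenue (M w) j)%:E <= (2 * n%:R * n%:R)%:E)%E.
Proof.
have scaled_ge0 (j : 'I_N) w : setT w -> (0 <= (scaled_revenue (M w) j)%:E)%E.
  by rewrite lee_fin scaled_revenue_ge0.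
rewrite -(ge0_integral_sum P measurableT (fun j : 'I_N => measurable_scaled_revenue j)
  scaled_ge0).
rewrite -[X in (_ <= X)%E]mule1 -(probability_setT P) -integral_cst //.
apply: ge0_le_integral => //.
- by move=> w _; rewrite sume_ge0 // => j _; exact: scaled_ge0.
- by apply: emeasurable_sum => j; exact: measurable_scaled_revenue.
move=> w _; rewrite sumEFin lee_fin.
by have [M_truthful M_ir] := M_ut.1 w; exact: sum_scaled_revenue_le.
Qed.

Lemma competitive_scaled_revenue k L j : (k <= n)%N -> 0 < L ->
  (forall t : profile R n, nonneg_profile t ->
     ((Fk k t / L)%:E <= expected_revenue P M t)%E) ->
  ((n%:R ^+ 2 / L)%:E <= \int[P]_w (scaled_revenue (M w) j)%:E)%E.
Proof.
move=> kn L_gt0 competitive; have pow_gt0 : 0 < (2 : R) ^+ j by rewrite exprn_gt0.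
apply: le_trans (expected_revenue_le_scaled j).
have -> : n%:R ^+ 2 / L = (2 ^+ j)^-1 * (n%:R ^+ 2 * 2 ^+ j / L).
  by field; rewrite !gt_eqF.
rewrite EFinM; apply: lee_wpmul2l; first by rewrite lee_fin invr_ge0 ltW.
apply: le_trans (competitive _ (cst_profile_nonneg (ltW pow_gt0))).
by rewrite lee_fin ler_pM2r ?invr_gt0 // Fk_cst_profile // ltW.
Qed.

End RandomizedMechanism.

Theorem claim3 (R : realType) (k : nat) : (1 <= k)%N ->
  forall L : R, 1 <= L ->
  exists n : nat, (k <= n)%N /\
    forall (d : measure_display) (Omega : measurableType d)
           (P : probability Omega R) (M : Omega -> mech R n),
      universally_truthful P M ->
      ~ (forall t : profile R n, nonneg_profile t ->
           ((Fk k t / L)%:E <= expected_revenue P M t)%E).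
Proof.
move=> k_ge1 L L_ge1; exists k; split => // d Omega P M M_ut competitive.
have L_gt0 : 0 < L := lt_le_trans ltr01 L_ge1.
pose N := (Num.trunc (2 * L)).+1.
have := le_trans (lee_sum (index_enum 'I_N)
    (fun (j : 'I_N) _ => competitive_scaled_revenue M_ut j (leqnn k) L_gt0 competitive))
  (sum_expected_scaled_revenue_le M_ut N).
rewrite sumEFin lee_fin sumr_const card_ord -[_ *+ N]mulr_natl -mulrA -expr2.
have N_gt : 2 * L < N%:R := truncnS_gt (2 * L).
have x_gt0 : 0 < k%:R ^+ 2 / L by rewrite divr_gt0 ?exprn_gt0 ?ltr0n.
have xL : k%:R ^+ 2 / L * L = k%:R ^+ 2 by rewrite divfK ?gt_eqF.
(* [N * x <= 2 * (x * L)] with [x > 0] contradicts [2 * L < N]. *)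
move: x_gt0 xL; set x := k%:R ^+ 2 / L; nra.
Qed.
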